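(* Let $\mathcal{L}\in\mathrm{Mat}_d(\mathbb{Z})$ be invertible over $\mathbb{Q}$. Let $G=\mathbb{Z}^d/\mathcal{L}^2\mathbb{Z}^d$ (a finite abelian group), let $H$ be its subgroup $\mathcal{L}\mathbb{Z}^d/\mathcal{L}^2\mathbb{Z}^d$, and note that $\mathcal{L}$ induces a homomorphism $G\to G$, also denoted $\mathcal{L}$. Let $X\subseteq G$ with $0\in X$. Then at least one of the following holds: (1) $X+H$ does not generate $G$; (2) $X+\mathcal{L} X\supsetneq X$; (3) $H\subseteq X$.
   Context: Note $X+\mathcal{L}X\supseteq X$ always holds since $0\in X$. *)

From HB Require Import structures.
From mathcomp Require Import all_boot all_order all_algebra.
Set Implicit Arguments. Unset Strict Implicit. Unset Printing Implicit Defensive.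
Import Order.TTheory GRing.Theory Num.Theory.
Local Open Scope ring_scope.

(* Subsets of the
   quotient G = Z^d / L^2 Z^d are represented by their preimages in Z^d,
   i.e. subsets of Z^d invariant under translation by L^2 Z^d. *)

Definition lat (d : nat) (M : 'M[int]_d) (v : 'cV[int]_d) : Prop :=
  exists w : 'cV[int]_d, v = M *m w.

Definition sumset (d : nat) (A B : 'cV[int]_d -> Prop) (v : 'cV[int]_d) : Prop :=
  exists a b, A a /\ B b /\ v = a + b.

Definition matimage (d : nat) (M : 'M[int]_d) (A : 'cV[int]_d -> Prop)
  (v : 'cV[int]_d) : Prop := exists a, A a /\ v = M *m a.

Inductive gen (d : nat) (S : 'cV[int]_d -> Prop) : 'cV[int]_d -> Prop :=
  | gen_in : forall v, S v -> gen S v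
  | gen_0 : gen S 0
  | gen_sub : forall u v, gen S u -> gen S v -> gen S (u - v).

(* A is a union of cosets of L^2 Z^d, i.e. the preimage of a subset of G *)
Definition L2periodic (d : nat) (L : 'M[int]_d) (A : 'cV[int]_d -> Prop) : Prop :=
  forall x w, A x -> A (x + (L *m L) *m w).

From HB Require Import structures.
From mathcomp Require Import all_boot all_order all_algebra.
From Stdlib Require Import Classical.
Set Implicit Arguments. Unset Strict Implicit. Unset Printing Implicit Defensive.
Import Order.TTheory GRing.Theory Num.Theory.
Local Open Scope ring_scope.

(* If X + L X = X, the translations u with X + L u = X form a subgroup of Z^d:
   it is closed under addition, and under negation because L u has finite
   order modulo L^2 Z^d (det(L)^2 L u lies in L^2 Z^d).  This subgroup contains
   X and L Z^d, hence X + H; if X + H generates everything, then every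
   L w = 0 + L w lies in X. *)

Lemma det_neq0_of_unitmx_rat d (L : 'M[int]_d) :
  map_mx (fun z : int => (z%:~R : rat)) L \in unitmx -> \det L != 0.
Proof.
rewrite unitmxE unitfE det_map_mx.
by apply: contra => /eqP ->.
Qed.

Lemma mulmx_sq_adj (R : comNzRingType) d (L : 'M[R]_d) (u : 'cV[R]_d) :
  (L *m L) *m (\adj L *m (\det L *: u)) = (\det L ^+ 2) *: (L *m u).
Proof.
rewrite -mulmxA (mulmxA L (\adj L)) mul_mx_adj mul_scalar_mx.
by rewrite -!scalemxAr scalerA expr2.
Qed.

Lemma mulrn_in_lat_sq d (L : 'M[int]_d) (u : 'cV[int]_d) : \det L != 0 ->
  exists2 m, (0 < m)%N & lat (L *m L) ((L *m u) *+ m).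
Proof.
move=> detL0; exists (absz (\det L ^+ 2)); first by rewrite absz_gt0 expf_neq0.
exists (\adj L *m (\det L *: u)).
rewrite mulmx_sq_adj; set z := \det L ^+ 2; have z_ge0 : 0 <= z := sqr_ge0 _.
by rewrite -[z in z *: _]intz scaler_int -{2}(gez0_abs z_ge0).
Qed.

Section ShiftStable.

Variables (d : nat) (L : 'M[int]_d) (X : 'cV[int]_d -> Prop).

Definition shift_stable (u : 'cV[int]_d) : Prop :=
  forall x, X x -> X (x + L *m u).

Lemma shift_stable0 : shift_stable 0.
Proof. by move=> x Xx; rewrite mulmx0 addr0. Qed.

Lemma shift_stableD u v :
  shift_stable u -> shift_stable v -> shift_stable (u + v).
Proof. by move=> su sv x Xx; rewrite mulmxDr addrA; apply/sv/su. Qed.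

Lemma shift_stableMn u k :
  shift_stable u -> forall x, X x -> X (x + (L *m u) *+ k).
Proof.
move=> su; elim: k => [|k IHk] x Xx; first by rewrite mulr0n addr0.
by rewrite mulrSr addrA; apply/su/IHk.
Qed.

Hypotheses (X_periodic : L2periodic L X) (detL_neq0 : \det L != 0).

Lemma shift_stable_lat w : shift_stable (L *m w).
Proof. by move=> x Xx; rewrite mulmxA; apply: X_periodic. Qed.

Lemma shift_stableN u : shift_stable u -> shift_stable (- u).
Proof.
move=> su x Xx.
have [m m_gt0 [w Lum]] := mulrn_in_lat_sq u detL_neq0.
have := X_periodic (- w) (shift_stableMn m.-1 su Xx).
rewrite mulmxN -Lum -[in (L *m u) *+ m](prednK m_gt0) mulrSr.
by rewrite opprD addrA addrK mulmxN.
Qed.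

Lemma shift_stable_gen S u :
  (forall s, S s -> shift_stable s) -> gen S u -> shift_stable u.
Proof.
move=> sS; elim=> [v /sS //| |v w _ sv _ sw].
  exact: shift_stable0.
exact/shift_stableD/shift_stableN.
Qed.

Lemma shift_stable_sumset_lat :
  (forall a, X a -> shift_stable a) ->
  forall u, sumset X (lat L) u -> shift_stable u.
Proof.
by move=> sX u [a [_ [Xa [[w ->] ->]]]]; apply/shift_stableD/shift_stable_lat/sX.
Qed.

End ShiftStable.

Theorem lemma3p2 (d : nat) (L : 'M[int]_d) (X : 'cV[int]_d -> Prop) :
  map_mx (fun z : int => (z%:~R : rat)) L \in unitmx ->
  L2periodic L X ->
  X 0 ->
  (* (1) X + H does not generate G *)
  (~ (forall v, gen (sumset X (lat L)) v))
  \/ (* (2) X + L X strictly contains X *)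
  ((forall v, X v -> sumset X (matimage L X) v) /\
   (exists v, sumset X (matimage L X) v /\ ~ X v))
  \/ (* (3) H is contained in X *)
  (forall v, lat L v -> X v).
Proof.
move=> /det_neq0_of_unitmx_rat detL0 X_periodic X0.
have X_sub : forall v, X v -> sumset X (matimage L X) v.
  move=> v Xv; exists v, 0; rewrite addr0; do !split=> //.
  by exists 0; rewrite mulmx0.
have [strict | closed] := classic (exists v, sumset X (matimage L X) v /\ ~ X v).
  by right; left.
have sX : forall a, X a -> shift_stable L X a.
  move=> a Xa x Xx; apply: NNPP => Xn; apply: closed.
  by exists (x + L *m a); split=> //; exists x, (L *m a); do !split=> //; exists a.
have [genT | ] := classic (forall v, gen (sumset X (lat L)) v); last by left.
right; right => _ [w ->].
have sw := shift_stable_sumset_lat X_periodic sX.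
have := shift_stable_gen X_periodic detL0 sw (genT w).
by rewrite -[L *m w]add0r; apply.
Qed.
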